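(* In the $\ell^2$ linear social choice setting, random dictatorship has worst-case distortion at most $O(d^{5/2})$.
   Context: Setting ($\ell^2$ linear social choice). Fix a dimension $d$. An instance consists of $n$ voters and $m$ candidates, each a vector in $\mathbb{R}^d_{\ge 0}$ with Euclidean norm $1$, with every voter vector in $\mathrm{Cone}(C)$ (nonnegative linear combinations of the candidate vectors $C$). Utility $u_v(c)=v^\top c$; each voter reports a ranking of $C$ consistent with its utilities (ties broken arbitrarily). $\mathrm{UW}(c)=\sum_v u_v(c)$. Distortion of a randomized rule on an instance: $\max_c\mathrm{UW}(c)/\mathbb{E}_{c\sim f}[\mathrm{UW}(c)]$; worst-case distortion is the supremum over instances, as a function of $d$. Random dictatorship: pick a voter uniformly at random and output its top-ranked candidate. *)

From mathcomp Require Import all_boot all_order all_algebra.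
From mathcomp Require Import reals.
Set Implicit Arguments. Unset Strict Implicit. Unset Printing Implicit Defensive.
Import Order.TTheory GRing.Theory Num.Theory.
Local Open Scope ring_scope.

Section L2SocialChoice.
Variables (R : realType) (d n m : nat).

Definition dotp (x y : 'I_d -> R) : R := \sum_(i < d) x i * y i.

Definition unit_nonneg (x : 'I_d -> R) : Prop :=
  (forall i, 0 <= x i) /\ Num.sqrt (dotp x x) = 1.

Definition in_cone (C : 'I_m -> 'I_d -> R) (x : 'I_d -> R) : Prop :=
  exists lam : 'I_m -> R, (forall j, 0 <= lam j) /\
    forall i, x i = \sum_(j < m) lam j * C j i.

Definition l2_instance (V : 'I_n -> 'I_d -> R) (C : 'I_m -> 'I_d -> R) : Prop :=
  (forall v, unit_nonneg (V v)) /\ (forall c, unit_nonneg (C c)) /\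
  (forall v, in_cone C (V v)).

Definition util (V : 'I_n -> 'I_d -> R) (C : 'I_m -> 'I_d -> R) v c : R :=
  dotp (V v) (C c).

Definition UW V C (c : 'I_m) : R := \sum_(v < n) util V C v c.

(* top : voter -> its top-ranked candidate, for a ranking consistent with
   utilities with ties broken arbitrarily *)
Definition valid_top V C (top : 'I_n -> 'I_m) : Prop :=
  forall v c, util V C v c <= util V C v (top v).

Definition rd_welfare V C (top : 'I_n -> 'I_m) : R :=
  (n%:R)^-1 * \sum_(v < n) UW V C (top v).

Definition rd_distortion V C top : R :=
  (\big[Num.max/0]_(c < m) UW V C c) / rd_welfare V C top.

End L2SocialChoice.

From mathcomp Require Import all_boot all_order all_algebra.
From mathcomp Require Import reals ring.
Import Order.TTheory GRing.Theory Num.Theory.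
Local Open Scope ring_scope.

(** A voter [v = sum_j l_j c_j] in the cone of the candidates gets utility at
    least [1/sqrt d] from its favourite candidate [t]: [1 = v.v <= (sum_j l_j) v.t]
    and, the candidates being nonnegative unit vectors,
    [sum_j l_j <= sum_j l_j sum_i c_j i = sum_i v i <= sqrt d].  Summing over the
    voters, [n <= sqrt d * T] where [T] is the total utility the voters get from
    their own favourites.  Splitting [T] along the coordinates,
    [T = sum_i A_i] with [A_i = sum_v v_i top(v)_i], and Cauchy-Schwarz together
    with [A_i^2 <= sum_(w, v) v_i top(w)_i] (all coordinates lie in [[0, 1]])
    give [T^2 <= d * sum_v UW(top v) = d * n * E[UW]].  As the optimum is at most
    [n], the distortion is at most [n^2 / (n E[UW]) <= d^2], which is within the
    claimed [O(d^(5/2))]. *)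

Section UnitVectors.
Context {R : realType} {d : nat}.
Implicit Types x y : 'I_d -> R.

Lemma dotp_ge0 [x y] :
  (forall i, 0 <= x i) -> (forall i, 0 <= y i) -> 0 <= dotp x y.
Proof. by move=> x_ge0 y_ge0; apply: sumr_ge0 => i _; exact: mulr_ge0. Qed.

Lemma dotp_sqr_le x y : dotp x y ^+ 2 <= dotp x x * dotp y y.
Proof.
have lagrange : \sum_(i < d) \sum_(j < d) (x i * y j - x j * y i) ^+ 2
    = (dotp x x * dotp y y - dotp x y ^+ 2) *+ 2.
  transitivity (\sum_(i < d) \sum_(j < d) (x i * x i * (y j * y j)
      + x j * x j * (y i * y i) - (x i * y i * (x j * y j)) *+ 2)).
    by apply: eq_bigr => i _; apply: eq_bigr => j _; ring.
  under eq_bigr => i _ do rewrite sumrB big_split sumrMnl /=.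
  rewrite sumrB big_split sumrMnl /= -!big_distrlr /= exchange_big /=.
  by rewrite -big_distrlr /= -expr2 /dotp; ring.
suff : 0 <= (dotp x x * dotp y y - dotp x y ^+ 2) *+ 2.
  by rewrite pmulrn_lge0 // subr_ge0.
rewrite -lagrange; apply: sumr_ge0 => i _; apply: sumr_ge0 => j _.
exact: sqr_ge0.
Qed.

Lemma sqr_sum_le_dim x : (\sum_(i < d) x i) ^+ 2 <= d%:R * dotp x x.
Proof.
pose one : 'I_d -> R := fun=> 1.
have := dotp_sqr_le x one.
have -> : dotp x one = \sum_(i < d) x i by apply: eq_bigr => i _; rewrite mulr1.
have -> : dotp one one = d%:R.
  by rewrite /dotp /one; under eq_bigr do rewrite mulr1; rewrite sumr_const card_ord.
by rewrite mulrC.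
Qed.

Lemma unit_nonneg_dotpp [x] : unit_nonneg x -> dotp x x = 1.
Proof.
case=> x_ge0 norm_x; rewrite -(sqr_sqrtr (dotp_ge0 x_ge0 x_ge0)).
by rewrite norm_x expr1n.
Qed.

Lemma unit_dotp_le1 x y : unit_nonneg x -> unit_nonneg y -> dotp x y <= 1.
Proof.
move=> ux uy; have [x_ge0 _] := ux; have [y_ge0 _] := uy.
rewrite -(@expr_le1 _ 2) //; last exact: dotp_ge0.
by have := dotp_sqr_le x y; rewrite !unit_nonneg_dotpp // mulr1.
Qed.

Lemma unit_coord_le1 x i : unit_nonneg x -> x i <= 1.
Proof.
move=> ux; have [x_ge0 _] := ux; rewrite -(@expr_le1 _ 2) //.
rewrite -(unit_nonneg_dotpp ux) /dotp (bigD1 i) //= expr2 lerDl.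
by apply: sumr_ge0 => j _; exact: mulr_ge0.
Qed.

Lemma unit_sum_ge1 [x] : unit_nonneg x -> 1 <= \sum_(i < d) x i.
Proof.
move=> ux; have [x_ge0 _] := ux; rewrite -(unit_nonneg_dotpp ux).
apply: ler_sum => i _; rewrite ler_piMr //; exact: unit_coord_le1.
Qed.

Lemma unit_sum_le_sqrt_dim [x] :
  unit_nonneg x -> \sum_(i < d) x i <= Num.sqrt d%:R.
Proof.
move=> ux; have [x_ge0 _] := ux.
rewrite -ler_sqr ?nnegrE ?sqrtr_ge0 ?sumr_ge0 // sqr_sqrtr ?ler0n //.
by have := sqr_sum_le_dim x; rewrite unit_nonneg_dotpp // mulr1.
Qed.

End UnitVectors.

Lemma cone_top_utility_ge (R : realType) (d m : nat)
    (C : 'I_m -> 'I_d -> R) (v : 'I_d -> R) (t : 'I_m) :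
  (forall c, unit_nonneg (C c)) -> unit_nonneg v -> in_cone C v ->
  (forall c, dotp v (C c) <= dotp v (C t)) ->
  1 <= Num.sqrt d%:R * dotp v (C t).
Proof.
move=> uC uv [lam [lam_ge0 v_eq]] t_top.
have [v_ge0 _] := uv; have [Ct_ge0 _] := uC t.
have dotp_v : dotp v v = \sum_(j < m) lam j * dotp v (C j).
  rewrite [LHS]/dotp; under eq_bigr => i _ do rewrite {2}v_eq mulr_sumr.
  rewrite exchange_big /=; apply: eq_bigr => j _.
  by rewrite /dotp mulr_sumr; apply: eq_bigr => i _; ring.
have sum_v : \sum_(i < d) v i = \sum_(j < m) lam j * \sum_(i < d) C j i.
  under eq_bigr => i _ do rewrite v_eq.
  by rewrite exchange_big; apply: eq_bigr => j _; rewrite mulr_sumr.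
have lam_le : \sum_(j < m) lam j <= Num.sqrt d%:R.
  apply: le_trans _ (unit_sum_le_sqrt_dim uv); rewrite sum_v.
  by apply: ler_sum => j _; rewrite ler_peMr // unit_sum_ge1.
rewrite -[leLHS](unit_nonneg_dotpp uv) dotp_v.
apply: le_trans (_ : (\sum_(j < m) lam j) * dotp v (C t) <= _).
  by rewrite mulr_suml; apply: ler_sum => j _; rewrite ler_wpM2l.
by rewrite ler_wpM2r // dotp_ge0.
Qed.

Lemma div_mean_le (R : realFieldType) (opt N S D : R) :
  0 <= N -> 0 <= S -> 0 <= D -> opt <= N -> N ^+ 2 <= D * S ->
  opt / (N^-1 * S) <= D.
Proof.
move=> N_ge0 S_ge0 D_ge0 opt_le N2_le.
have [->|N_gt0] := eqVneq N 0; first by rewrite invr0 mul0r invr0 mulr0.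
have {}N_gt0 : 0 < N by rewrite lt_def N_gt0.
have [S0|S_gt0] := eqVneq S 0.
  move: N2_le; rewrite S0 mulr0 => /(lt_le_trans (exprn_gt0 2 N_gt0)).
  by rewrite ltxx.
have {}S_gt0 : 0 < S by rewrite lt_def S_gt0.
rewrite invfM invrK mulrA ler_pdivrMr //.
by apply: le_trans N2_le; rewrite expr2 ler_wpM2r.
Qed.

Section RandomDictatorship.
Context {R : realType} {d n m : nat}.
Context {V : 'I_n -> 'I_d -> R} {C : 'I_m -> 'I_d -> R} {top : 'I_n -> 'I_m}.
Hypotheses (inst : l2_instance V C) (top_valid : valid_top V C top).

Let top_utility : R := \sum_(v < n) util V C v (top v).
Let rd_total : R := \sum_(v < n) UW V C (top v).

Lemma optimum_le_voters : \big[Num.max/0]_(c < m) UW V C c <= n%:R.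
Proof.
have [uV [uC _]] := inst.
apply: (big_ind (fun y => y <= n%:R)) => // [x y|c _]; first by rewrite ge_max => ->.
rewrite -[X in X%:R]card_ord -sumr_const /UW; apply: ler_sum => v _.
exact: unit_dotp_le1.
Qed.

Lemma voters_le_top_utility : n%:R <= Num.sqrt d%:R * top_utility.
Proof.
have [uV [uC cone]] := inst.
rewrite -[X in X%:R]card_ord -sumr_const mulr_sumr; apply: ler_sum => v _.
by apply: cone_top_utility_ge => //; exact: top_valid.
Qed.

Lemma sqr_top_utility_le : top_utility ^+ 2 <= d%:R * rd_total.
Proof.
have [uV [uC _]] := inst.
pose A i := \sum_(v < n) V v i * C (top v) i.
have -> : top_utility = \sum_(i < d) A i by rewrite exchange_big.
apply: le_trans (sqr_sum_le_dim A) _; rewrite ler_wpM2l //.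
apply: le_trans (_ : _ <= \sum_(i < d) \sum_(w < n) \sum_(v < n)
    V v i * C (top w) i) _.
  apply: ler_sum => i _; rewrite big_distrlr /=; apply: ler_sum => w _.
  apply: ler_sum => v _; have [Vw_ge0 _] := uV w; have [Ctv_ge0 _] := uC (top v).
  have [Vv_ge0 _] := uV v; have [Ctw_ge0 _] := uC (top w).
  have -> : V w i * C (top w) i * (V v i * C (top v) i)
      = V v i * C (top w) i * (V w i * C (top v) i) by ring.
  rewrite ler_piMr ?mulr_ge0 // mulr_ile1 ?unit_coord_le1 //.
rewrite exchange_big; under eq_bigr do rewrite exchange_big.
exact: lexx.
Qed.

Lemma rd_distortion_le_sqr_dim : rd_distortion V C top <= d%:R ^+ 2.
Proof.
have [uV [uC _]] := inst.
have util_ge0 v c : 0 <= util V C v c.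
  by apply: dotp_ge0; [case: (uV v) | case: (uC c)].
apply: div_mean_le; rewrite ?exprn_ge0 ?ler0n //.
- by apply: sumr_ge0 => v _; apply: sumr_ge0 => w _.
- exact: optimum_le_voters.
apply: le_trans (_ : _ <= d%:R * top_utility ^+ 2) _.
  rewrite -(sqr_sqrtr (ler0n R d)) -exprMn ler_sqr ?nnegrE ?ler0n //.
    exact: voters_le_top_utility.
  by rewrite mulr_ge0 ?sqrtr_ge0 ?sumr_ge0.
by rewrite expr2 -mulrA ler_wpM2l // sqr_top_utility_le.
Qed.

End RandomDictatorship.

Theorem theorem15 (R : realType) :
  exists K : R, 0 < K /\
  forall (d n m : nat), (1 <= d)%N ->
  forall (V : 'I_n -> 'I_d -> R) (C : 'I_m -> 'I_d -> R) (top : 'I_n -> 'I_m),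
    l2_instance V C -> valid_top V C top ->
    rd_distortion V C top <= K * ((d%:R) ^+ 2 * Num.sqrt (d%:R)).
Proof.
exists 1; split=> // d n m d_ge1 V C top inst top_valid.
apply: le_trans (rd_distortion_le_sqr_dim inst top_valid) _.
by rewrite mul1r ler_peMr ?exprn_ge0 // -[leLHS]sqrtr1 ler_sqrt // ler1n.
Qed.
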